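(* Let $m\ge 1$ and let $\{S_n\}$ be a $G(m,\mathbf{p})$ game, i.e. a $\bmod m$ random walk with parameters $p_0,\dots,p_{m-1}\in(0,1)$ and $q_j=1-p_j$. Let $\mathbb{C}$ be the $m\times m$ transition matrix of the walk's congruence classes modulo $m$, and for $i=1,\dots,m$ let $\gamma_{im}$ be the $(i,i)$-th cofactor of $\mathbb{I}-\mathbb{C}$, with $\gamma_{\cdot m}=\gamma_{1m}+\cdots+\gamma_{mm}$. Then, with probability one, \[ \lim_{n\to\infty}\frac{S_n}{n}=\frac{1}{\gamma_{\cdot m}}\sum_{i=1}^m\gamma_{im}\,(p_{i-1}-q_{i-1}). \]
   Context: A $\bmod m$ random walk $G(m,\mathbf{p})$ is a Markov chain on $\mathbb{Z}$ with $S_{n+1}-S_n\in\{-1,+1\}$, $P(S_{n+1}-S_n=1\mid S_n=j)=p_j$, $P(S_{n+1}-S_n=-1\mid S_n=j)=q_j=1-p_j$, where $p_j=p_{j+m}$ for all $j\in\mathbb{Z}$. The matrix $\mathbb{C}$ has rows and columns indexed by $1,\dots,m$, index $i$ corresponding to the residue class $i-1 \bmod m$, and $\mathbb{C}_{ij}=P(S_{n+1}\equiv j-1 \pmod m\mid S_n\equiv i-1\pmod m)$; for $m\ge3$ its only nonzero entries are $\mathbb{C}_{i,i+1}=p_{i-1}$ and $\mathbb{C}_{i,i-1}=q_{i-1}$ (indices taken cyclically mod $m$). The $(i,i)$ cofactor is the determinant of $\mathbb{I}-\mathbb{C}$ with row $i$ and column $i$ deleted (equal to $1$ when $m=1$).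 *)

From HB Require Import structures.
From mathcomp Require Import all_boot all_order all_algebra.
From mathcomp Require Import all_classical all_reals all_analysis.
Unset Printing Implicit Defensive.
Import Order.TTheory GRing.Theory Num.Theory.
Import numFieldNormedType.Exports.
Local Open Scope classical_set_scope.
Local Open Scope ring_scope.

Definition modm_trans {R : realType} (p : int -> R) (z z' : int) : R :=
  if z' == z + 1 then p z else if z' == z - 1 then 1 - p z else 0.

(* S is a Markov chain on Z (arbitrary initial law) with the transition
   probabilities above, on the probability space (T, P):
   each S n is integer-valued with measurable level sets, and the
   finite-dimensional laws factor through the transition probabilities. *)
Definition is_modm_walk {R : realType} {d : measure_display} {T : measurableType d}
  (P : probability T R) (p : int -> R) (S : nat -> T -> int) : Prop :=
  (forall n (z : int), measurable [set t | S n t = z]) /\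
  (forall (n : nat) (s : nat -> int),
     P [set t | forall k, (k <= n.+1)%N -> S k t = s k] =
     (P [set t | forall k, (k <= n)%N -> S k t = s k] *
      (modm_trans p (s n) (s n.+1))%:E)%E).

(* The matrix C of the congruence classes mod m (m >= 1), indexed by
   'I_(m.-1.+1) (= 'I_m since m >= 1); index i stands for the residue i.
   C i j = P(S_{n+1} = j mod m | S_n = i mod m). *)
Definition modm_C {R : realType} (m : nat) (p : int -> R) : 'M[R]_(m.-1.+1) :=
  \matrix_(i, j) ((if ((i.+1 %% m)%N == j) then p (Posz i) else 0) +
                  (if (((i + m).-1 %% m)%N == j) then 1 - p (Posz i) else 0)).

(* gamma_{im}: the (i,i) cofactor of I - C (equal to 1 when m = 1). *)
Definition modm_gamma {R : realType} (m : nat) (p : int -> R) (i : 'I_(m.-1.+1)) : R :=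
  cofactor (1%:M - modm_C m p) i i.

Definition modm_drift {R : realType} (m : nat) (p : int -> R) : R :=
  (\sum_(i < m.-1.+1) modm_gamma m p i * (p (Posz i) - (1 - p (Posz i)))) /
  (\sum_(i < m.-1.+1) modm_gamma m p i).

From HB Require Import structures.
From mathcomp Require Import all_boot all_order all_algebra.
From mathcomp Require Import all_classical all_reals all_analysis.
From mathcomp Require Import ring lra.
Import Order.TTheory GRing.Theory Num.Theory.
Import numFieldNormedType.Exports.
Local Open Scope classical_set_scope.
Local Open Scope ring_scope.

(* The cofactors [gamma_i] of [I - C] form a left null vector of [I - C], whose
   rows sum to zero, and adding [1] to the first column of [I - C] gives a
   matrix of determinant [sum_i gamma_i], which is nonzero by a maximum
   principle because [0 < p_j < 1].  Hence the Poisson equation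
   [h - C h = (p - q) - c] is solvable, [c] being exactly the [gamma]-weighted
   average of [p - q], and [phi z = z + h (z mod m)] satisfies
   [E[phi (S_(n+1)) | S_n] = phi (S_n) + c].  So [phi (S_n) - phi (S_0) - n c]
   is a martingale with bounded increments; its fourth moment is [O(n^2)], so by
   Markov's inequality and Borel-Cantelli it is [o(n)] almost surely, while
   [S_n - phi (S_n)] stays bounded. *)

Section ZeroRowSums.
Context {F : fieldType}.

Lemma sumr_delta_mul {n} (j : 'I_n) (f : 'I_n -> F) :
  \sum_l (l == j)%:R * f l = f j.
Proof.
rewrite (bigD1 j) //= eqxx mul1r big1 ?addr0 // => l /negbTE ->; exact: mul0r.
Qed.

Context {n : nat}.

Lemma det_rowsum0 (M : 'M[F]_n.+1) : (forall i, \sum_j M i j = 0) -> \det M = 0.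
Proof.
move=> M0; rewrite -det_tr; apply/eqP/det0P; exists (const_mx 1).
  by apply/negP => /eqP/matrixP/(_ ord0 ord0)/eqP; rewrite !mxE oner_eq0.
apply/matrixP => i j; rewrite !mxE -[RHS](M0 j); apply: eq_bigr => k _.
by rewrite !mxE mul1r.
Qed.

Variable M : 'M[F]_n.+1.
Hypothesis M0 : forall i, \sum_j M i j = 0.

Lemma cofactor_rowsum0 i j k : cofactor M i j = cofactor M i k.
Proof.
(* Replacing row [i] by [e_j - e_k] keeps all row sums zero; expanding the
   vanishing determinant along row [i] leaves [cofactor M i j - cofactor M i k]. *)
pose M' := \matrix_(r, l) if r == i then (l == j)%:R - (l == k)%:R else M r l.
have delta1 (l0 : 'I_n.+1) : \sum_l (l == l0)%:R = 1 :> F.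
  rewrite -[RHS](sumr_delta_mul l0 (fun=> 1)).
  by apply: eq_bigr => l _; rewrite mulr1.
have M'0 r : \sum_l M' r l = 0.
  under eq_bigr do rewrite mxE.
  by case: eqP => _; [rewrite sumrB !delta1 subrr | exact: M0].
have cofM' l : cofactor M' i l = cofactor M i l.
  rewrite /cofactor; congr (_ * \det _); apply/matrixP => r s.
  by rewrite !mxE eq_sym (negbTE (neq_lift i r)).
have := det_rowsum0 _ M'0; rewrite (expand_det_row _ i).
under eq_bigr do rewrite cofM' mxE eqxx mulrBl.
by rewrite sumrB !sumr_delta_mul => /eqP; rewrite subr_eq0 => /eqP.
Qed.

Lemma diag_cofactor_mul_rowsum0 l : \sum_i cofactor M i i * M i l = 0.
Proof.
have := congr1 (fun X : 'M[F]_n.+1 => X l l) (mul_adj_mx M).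
rewrite det_rowsum0 // !mxE mul0rn => adjM; rewrite -[RHS]adjM.
by apply: eq_bigr => i _; rewrite mxE (cofactor_rowsum0 i i l).
Qed.

Lemma det_add_delta_col0 :
  \det (\matrix_(i, j) (M i j + (j == ord0)%:R)) = \sum_i cofactor M i i.
Proof.
rewrite (expand_det_col _ ord0).
have cofM' i : cofactor (\matrix_(i, j) (M i j + (j == ord0)%:R)) i ord0 =
    cofactor M i i.
  rewrite (cofactor_rowsum0 i i ord0) /cofactor; congr (_ * \det _).
  by apply/matrixP => r s; rewrite !mxE eq_sym (negbTE (neq_lift ord0 s)) addr0.
under eq_bigr do rewrite cofM' mxE eqxx mulrDl mul1r.
rewrite big_split /= [X in X + _](_ : _ = 0) ?add0r //.
rewrite -[RHS](det_rowsum0 _ M0) (expand_det_col _ ord0); apply: eq_bigr => i _.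
by rewrite (cofactor_rowsum0 i i ord0).
Qed.

End ZeroRowSums.

Section ResidueChain.
Variables (R : realType) (m : nat) (p : int -> R).
Hypothesis m_gt0 : (0 < m)%N.
Local Notation N := m.-1.+1.

Lemma predS_m : N = m. Proof. exact: prednK. Qed.

Lemma ltn_ord_m (i : 'I_N) : (i < m)%N.
Proof. by case: i => i /=; rewrite predS_m. Qed.

Lemma ltn_mod_N k : (k %% m < N)%N.
Proof. by rewrite predS_m ltn_pmod. Qed.

Definition res_succ (i : 'I_N) : 'I_N := inord (i.+1 %% m).
Definition res_pred (i : 'I_N) : 'I_N := inord ((i + m).-1 %% m).

Lemma iter_res_succ k i : iter k res_succ i = inord ((i + k) %% m).
Proof.
elim: k => [|k IHk]; first by rewrite addn0 modn_small ?inord_val // ltn_ord_m.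
rewrite iterS IHk /res_succ inordK ?ltn_mod_N // addnS.
by rewrite -[X in (X %% m)%N]addn1 modnDml addn1.
Qed.

Lemma res_succ_reach i j : exists k, iter k res_succ i = j.
Proof.
exists (j + m - i)%N; rewrite iter_res_succ addnBCA ?leqnn ?subnn ?addn0 //.
  by rewrite modnDr modn_small ?inord_val // ltn_ord_m.
exact: leq_trans (ltnW (ltn_ord_m i)) (leq_addl _ _).
Qed.

Lemma modm_C_mul (h : 'I_N -> R) i :
  \sum_j modm_C m p i j * h j = p i * h (res_succ i) + (1 - p i) * h (res_pred i).
Proof.
have sum_if (k : nat) (a : R) :
    \sum_(j < N) (if (k %% m)%N == j then a else 0) * h j = a * h (inord (k %% m)).
  rewrite -(sumr_delta_mul (inord (k %% m)) (fun j => a * h j)).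
  apply: eq_bigr => j _; rewrite -(inj_eq val_inj) /= inordK ?ltn_mod_N // eq_sym.
  by case: eqP; rewrite ?mul1r ?mul0r.
by under eq_bigr do rewrite mxE mulrDl; rewrite big_split /= !sum_if.
Qed.

Definition I_minus_C : 'M[R]_N := 1%:M - modm_C m p.

Lemma I_minus_C_mul (h : 'I_N -> R) i :
  \sum_j I_minus_C i j * h j = h i - (p i * h (res_succ i) + (1 - p i) * h (res_pred i)).
Proof.
have IC j : I_minus_C i j = (1%:M : 'M[R]_N) i j - modm_C m p i j.
  by rewrite /I_minus_C [LHS]mxE [X in _ + X]mxE.
under eq_bigr do rewrite IC mulrBl.
rewrite sumrB -modm_C_mul; congr (_ - _).
rewrite (bigD1 i) //= mxE eqxx mul1r big1 ?addr0 // => j ji.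
by rewrite mxE eq_sym (negbTE ji) mul0r.
Qed.

Lemma I_minus_C_rowsum0 i : \sum_j I_minus_C i j = 0.
Proof.
have := I_minus_C_mul (fun=> 1) i; under eq_bigr do rewrite mulr1.
by move=> ->; ring.
Qed.

Hypothesis p01 : forall i, 0 < p i < 1.

Lemma aug_kernel_eq0 (h : 'I_N -> R) :
  (forall i, h i - (p i * h (res_succ i) + (1 - p i) * h (res_pred i)) + h ord0 = 0) ->
  forall i, h i = 0.
Proof.
move=> hA.
have [imax _ hmax] := @arg_maxP _ _ _ ord0 xpredT h isT.
have [imin _ hmin] := @arg_minP _ _ _ ord0 xpredT h isT.
have {}hmax j : h j <= h imax by apply: hmax.
have {}hmin j : h imin <= h j by apply: hmin.
(* [h - C h] is [>= 0] at a maximum and [<= 0] at a minimum of [h]. *)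
have h0 : h ord0 = 0.
  have /andP[pmax0 pmax1] := p01 imax; have /andP[pmin0 pmin1] := p01 imin.
  have f1 : p imax * h (res_succ imax) <= p imax * h imax.
    by rewrite ler_pM2l.
  have f2 : (1 - p imax) * h (res_pred imax) <= (1 - p imax) * h imax.
    by rewrite ler_pM2l ?subr_gt0.
  have f3 : p imin * h imin <= p imin * h (res_succ imin).
    by rewrite ler_pM2l.
  have f4 : (1 - p imin) * h imin <= (1 - p imin) * h (res_pred imin).
    by rewrite ler_pM2l ?subr_gt0.
  have := hA imax; have := hA imin; lra.
have maxS i : h i = h imax -> h (res_succ i) = h imax.
  move=> hi; have := hA i; rewrite h0 addr0 hi.
  have /andP[pi0 pi1] := p01 i.
  have hs := hmax (res_succ i); have hp := hmax (res_pred i).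
  move=> e; apply/eqP; rewrite eq_le hs /=; nra.
have hM i : h i = h imax.
  have [k <-] := res_succ_reach imax i.
  by elim: k => [|k IHk] //; rewrite iterS maxS.
by move=> i; rewrite hM -(hM ord0).
Qed.

Definition aug_I_minus_C : 'M[R]_N := \matrix_(i, j) (I_minus_C i j + (j == ord0)%:R).

Lemma aug_I_minus_C_mul (h : 'I_N -> R) i :
  \sum_j aug_I_minus_C i j * h j = \sum_j I_minus_C i j * h j + h ord0.
Proof.
under eq_bigr do rewrite mxE mulrDl.
by rewrite big_split /= (sumr_delta_mul ord0 h).
Qed.

Lemma sum_gamma_neq0 : \sum_i modm_gamma m p i != 0.
Proof.
apply/negP => /eqP gamma0.
have : \det aug_I_minus_C^T == 0.
  by rewrite det_tr det_add_delta_col0 ?gamma0 //; exact: I_minus_C_rowsum0.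
case/det0P => v /negP v_neq0 v_ker; apply: v_neq0; apply/eqP/matrixP => a i.
rewrite (ord1 a) mxE; apply: (aug_kernel_eq0 (fun j => v ord0 j)) => {}i.
rewrite -I_minus_C_mul -aug_I_minus_C_mul.
have := congr1 (fun X : 'rV[R]_N => X ord0 i) v_ker; rewrite !mxE => vi.
rewrite -[RHS]vi.
by apply: eq_bigr => j _; rewrite [aug_I_minus_C^T _ _]mxE mulrC.
Qed.

Lemma poisson_solution : exists h : 'I_N -> R, forall i,
  h i - (p i * h (res_succ i) + (1 - p i) * h (res_pred i)) =
  (p i - (1 - p i)) - modm_drift m p.
Proof.
have unitB : aug_I_minus_C \in unitmx.
  rewrite unitmxE unitfE det_add_delta_col0 ?sum_gamma_neq0 //.
  exact: I_minus_C_rowsum0.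
pose g : 'cV[R]_N := \col_i ((p i - (1 - p i)) - modm_drift m p).
pose h j := (invmx aug_I_minus_C *m g) j ord0.
have Bh i : \sum_j I_minus_C i j * h j + h ord0 = g i ord0.
  rewrite -aug_I_minus_C_mul.
  by have := congr1 (fun X : 'cV[R]_N => X i ord0) (mulKVmx unitB g); rewrite mxE.
(* Weighting the rows by the cofactors kills the [I - C] part, and the choice of
   the drift makes [g] orthogonal to them too; so the extra unknown [h ord0] is 0. *)
have h0 : h ord0 = 0.
  have gamma_A : \sum_i modm_gamma m p i * (\sum_j I_minus_C i j * h j) = 0.
    under eq_bigr do rewrite big_distrr /=.
    rewrite exchange_big /= big1 // => j _.
    transitivity ((\sum_i cofactor I_minus_C i i * I_minus_C i j) * h j).
      by rewrite big_distrl; apply: eq_bigr => i _; rewrite mulrA.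
    by rewrite (diag_cofactor_mul_rowsum0 _ I_minus_C_rowsum0) mul0r.
  have gamma_g : \sum_i modm_gamma m p i * g i ord0 = 0.
    under eq_bigr do rewrite mxE mulrBr.
    by rewrite sumrB -big_distrl /= /modm_drift mulrC divfK ?sum_gamma_neq0 ?subrr.
  have := gamma_g; under eq_bigr do rewrite -Bh mulrDr.
  rewrite big_split /= gamma_A add0r -big_distrl /= => /eqP.
  by rewrite mulf_eq0 (negbTE sum_gamma_neq0) => /eqP.
by exists h => i; rewrite -I_minus_C_mul; have := Bh i; rewrite h0 addr0 mxE.
Qed.

End ResidueChain.

Arguments poisson_solution {R m p}.

Lemma sqr_le_of_norm_le {R : realDomainType} {x B : R} : `|x| <= B -> x ^+ 2 <= B ^+ 2.
Proof. by rewrite ler_norml => /andP[? ?]; nra. Qed.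

Lemma mean0_sqr_step_le {R : realFieldType} (q D1 D0 W B : R) : 0 <= q <= 1 ->
  q * D1 + (1 - q) * D0 = 0 -> `|D1| <= B -> `|D0| <= B ->
  q * (W + D1) ^+ 2 + (1 - q) * (W + D0) ^+ 2 <= W ^+ 2 + B ^+ 2.
Proof.
move=> /andP[q0 q1] mean0 /sqr_le_of_norm_le D1B /sqr_le_of_norm_le D0B.
have -> : q * (W + D1) ^+ 2 + (1 - q) * (W + D0) ^+ 2 =
  W ^+ 2 + 2 * W * (q * D1 + (1 - q) * D0) + (q * D1 ^+ 2 + (1 - q) * D0 ^+ 2) by ring.
by rewrite mean0 mulr0 addr0 lerD2l; nra.
Qed.

Lemma mean0_pow4_step_le {R : realFieldType} (q D1 D0 W B : R) : 0 <= q <= 1 ->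
  q * D1 + (1 - q) * D0 = 0 -> `|D1| <= B -> `|D0| <= B ->
  q * (W + D1) ^+ 4 + (1 - q) * (W + D0) ^+ 4 <=
  W ^+ 4 + 8 * B ^+ 2 * W ^+ 2 + 3 * B ^+ 4.
Proof.
move=> /andP[q0 q1] mean0 D1B D0B.
have B0 : 0 <= B by exact: le_trans (normr_ge0 _) D1B.
have pow4_le D : `|D| <= B -> D ^+ 4 <= B ^+ 4.
  move=> /sqr_le_of_norm_le DB; rewrite -[4%N]/(2 * 2)%N !exprM.
  by apply: sqr_le_of_norm_le; rewrite ger0_norm ?sqr_ge0.
have cube_le D : `|D| <= B -> W * D ^+ 3 <= B ^+ 2 * (W ^+ 2 + B ^+ 2) / 2.
  move=> DB; apply: le_trans (ler_norm _) _.
  have : `|W * D ^+ 3| <= `|W| * B ^+ 3.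
    by rewrite normrM normrX ler_wpM2l // lerXn2r // nnegrE.
  have : 0 <= (`|W| - B) ^+ 2 by apply: sqr_ge0.
  have : `|W| ^+ 2 = W ^+ 2 by rewrite real_normK ?num_real.
  have : 0 <= `|W| by [].
  rewrite ler_pdivlMr //; nra.
have -> : q * (W + D1) ^+ 4 + (1 - q) * (W + D0) ^+ 4 =
  W ^+ 4 + 4 * W ^+ 3 * (q * D1 + (1 - q) * D0)
  + 6 * W ^+ 2 * (q * D1 ^+ 2 + (1 - q) * D0 ^+ 2)
  + 4 * (q * (W * D1 ^+ 3) + (1 - q) * (W * D0 ^+ 3))
  + (q * D1 ^+ 4 + (1 - q) * D0 ^+ 4) by ring.
rewrite mean0 mulr0 addr0.
have := sqr_le_of_norm_le D1B; have := sqr_le_of_norm_le D0B => D02 D12.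
have s2 : q * D1 ^+ 2 + (1 - q) * D0 ^+ 2 <= B ^+ 2 by nra.
have := cube_le _ D1B; have := cube_le _ D0B => D03 D13.
have s3 : q * (W * D1 ^+ 3) + (1 - q) * (W * D0 ^+ 3) <=
    B ^+ 2 * (W ^+ 2 + B ^+ 2) / 2 by nra.
have := pow4_le _ D1B; have := pow4_le _ D0B => D04 D14.
have s4 : q * D1 ^+ 4 + (1 - q) * D0 ^+ 4 <= B ^+ 4 by nra.
have : 0 <= W ^+ 2 by apply: sqr_ge0.
nra.
Qed.

Section PathExpectation.
Context {R : realFieldType} (pr : int -> R).

Definition step (b : bool) : int := if b then 1 else -1.

Fixpoint path_end (z : int) (s : seq bool) : int :=
  if s is b :: s' then path_end (z + step b) s' else z.

Fixpoint expect_path (n : nat) (z : int) (F : seq bool -> R) : R :=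
  if n is n'.+1 then
    pr z * expect_path n' (z + step true) (fun s => F (true :: s)) +
    (1 - pr z) * expect_path n' (z + step false) (fun s => F (false :: s))
  else F [::].

Fixpoint path_weight (z : int) (s : seq bool) : R :=
  if s is b :: s' then (if b then pr z else 1 - pr z) * path_weight (z + step b) s'
  else 1.

Fixpoint bool_paths (n : nat) : seq (seq bool) :=
  if n is n'.+1 then [seq true :: s | s <- bool_paths n'] ++
                     [seq false :: s | s <- bool_paths n']
  else [:: [::]].

Lemma size_bool_paths n s : s \in bool_paths n -> size s = n.
Proof.
elim: n s => [|n IHn] s /=; first by rewrite inE => /eqP ->.
by rewrite mem_cat => /orP[] /mapP[s' s'_in ->] /=; rewrite IHn.
Qed.

Lemma uniq_bool_paths n : uniq (bool_paths n).
Proof.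
elim: n => [|n IHn] //=.
rewrite cat_uniq !map_inj_uniq //; try by move=> a b [].
by rewrite IHn /= andbT; apply/hasPn => _ /mapP[s _ ->]; apply/mapP => -[].
Qed.

Lemma expect_pathE n z F :
  expect_path n z F = \sum_(s <- bool_paths n) path_weight z s * F s.
Proof.
elim: n z F => [|n IHn] z F; first by rewrite /= big_seq1 mul1r.
rewrite /= big_cat !big_map /= !IHn !big_distrr /=.
by congr (_ + _); apply: eq_bigr => s _; rewrite mulrA.
Qed.

Lemma expect_pathD n z F G :
  expect_path n z (fun s => F s + G s) = expect_path n z F + expect_path n z G.
Proof. by elim: n z F G => [|n IHn] z F G //=; rewrite !IHn; ring. Qed.

Lemma expect_pathZ n z a F :
  expect_path n z (fun s => a * F s) = a * expect_path n z F.
Proof. by elim: n z F => [|n IHn] z F //=; rewrite !IHn; ring. Qed.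

Lemma expect_path_cst n z c : expect_path n z (fun=> c) = c.
Proof. by elim: n z => [|n IHn] z //=; rewrite !IHn; ring. Qed.

Lemma path_end_rcons z s b : path_end z (rcons s b) = path_end z s + step b.
Proof. by elim: s z => [|a s IHs] z //=. Qed.

Lemma path_weight_rcons z s b : path_weight z (rcons s b) =
  path_weight z s * (if b then pr (path_end z s) else 1 - pr (path_end z s)).
Proof.
elim: s z => [|a s IHs] z /=; first by rewrite mulr1 mul1r.
by rewrite IHs mulrA.
Qed.

Lemma expect_path_recr n z F : expect_path n.+1 z F =
  expect_path n z (fun s => pr (path_end z s) * F (rcons s true) +
                            (1 - pr (path_end z s)) * F (rcons s false)).
Proof.
elim: n z F => [|n IHn] z F //.
transitivity
  (pr z * expect_path n.+1 (z + step true) (fun s => F (true :: s)) +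
   (1 - pr z) * expect_path n.+1 (z + step false) (fun s => F (false :: s))) => //.
by rewrite (IHn (z + step true)) (IHn (z + step false)).
Qed.

Hypothesis pr01 : forall z, 0 <= pr z <= 1.

Lemma path_weight_ge0 z s : 0 <= path_weight z s.
Proof.
elim: s z => [|b s IHs] z //=; have /andP[pr0 pr1] := pr01 z.
by apply: mulr_ge0 => //; case: b; rewrite ?subr_ge0.
Qed.

Lemma expect_path_le n z F G :
  (forall s, F s <= G s) -> expect_path n z F <= expect_path n z G.
Proof.
elim: n z F G => [|n IHn] z F G FG /=; first exact: FG.
have /andP[pr0 pr1] := pr01 z.
by apply: lerD; apply: ler_wpM2l; rewrite ?subr_ge0 //; apply: IHn => s.
Qed.

Variables (phi : int -> R) (c B : R).
Hypothesis phi_drift : forall z,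
  pr z * phi (z + step true) + (1 - pr z) * phi (z + step false) = phi z + c.
Hypothesis phi_step_bound : forall z b, `|phi (z + step b) - phi z - c| <= B.

(* The martingale [phi (S_n) - phi (S_0) - n c], evaluated on the path [s]. *)
Definition centred z s := phi (path_end z s) - phi z - (size s)%:R * c.

Lemma centred_nil z : centred z [::] = 0.
Proof. by rewrite /centred /= mul0r !subrr. Qed.

Lemma centred_rcons z s b : centred z (rcons s b) =
  centred z s + (phi (path_end z s + step b) - phi (path_end z s) - c).
Proof. by rewrite /centred path_end_rcons size_rcons -natr1; ring. Qed.

Lemma centred_increment_mean0 z :
  pr z * (phi (z + step true) - phi z - c) +
  (1 - pr z) * (phi (z + step false) - phi z - c) = 0.
Proof.
transitivity (pr z * phi (z + step true) + (1 - pr z) * phi (z + step false)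
  - (phi z + c)); first by ring.
by rewrite phi_drift subrr.
Qed.

Lemma expect_centred_sqr_le n z :
  expect_path n z (fun s => centred z s ^+ 2) <= n%:R * B ^+ 2.
Proof.
elim: n => [|n IHn]; first by rewrite /= centred_nil expr0n mul0r.
rewrite expect_path_recr; apply: le_trans (_ : expect_path n z
    (fun s => centred z s ^+ 2 + B ^+ 2) <= _).
  apply: expect_path_le => s; rewrite !centred_rcons.
  exact: mean0_sqr_step_le (pr01 _) (centred_increment_mean0 _)
    (phi_step_bound _ _) (phi_step_bound _ _).
by rewrite expect_pathD expect_path_cst -natr1 mulrDl mul1r lerD2r.
Qed.

Lemma expect_centred_pow4_le n z :
  expect_path n z (fun s => centred z s ^+ 4) <= 4 * n%:R ^+ 2 * B ^+ 4.
Proof.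
elim: n => [|n IHn]; first by rewrite /= centred_nil expr0n /= expr0n mulr0 mul0r.
rewrite expect_path_recr; apply: le_trans (_ : expect_path n z (fun s =>
    centred z s ^+ 4 + 8 * B ^+ 2 * centred z s ^+ 2 + 3 * B ^+ 4) <= _).
  apply: expect_path_le => s; rewrite !centred_rcons.
  exact: mean0_pow4_step_le (pr01 _) (centred_increment_mean0 _)
    (phi_step_bound _ _) (phi_step_bound _ _).
rewrite !expect_pathD expect_path_cst expect_pathZ.
have := expect_centred_sqr_le n z.
have : 0 <= B ^+ 2 by apply: sqr_ge0.
have : 0 <= n%:R :> R by [].
rewrite -natr1 (_ : B ^+ 4 = B ^+ 2 * B ^+ 2) -?exprD //.
nra.
Qed.

End PathExpectation.

Lemma sum_inv_sqr_le (R : realFieldType) N :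
  \sum_(0 <= k < N) 1 / (k.+1%:R ^+ 2) <= 2 - 2 / N.+1%:R :> R.
Proof.
elim: N => [|N IHN]; first by rewrite big_geq // divr1 subrr.
rewrite big_nat_recr //=; apply: le_trans (lerD IHN (lexx _)) _.
set x : R := N.+1%:R.
have x1 : 1 <= x by rewrite /x ler1n.
have -> : N.+2%:R = x + 1 :> R by rewrite /x -natr1.
rewrite -addrA lerD2l -subr_le0.
(* Telescoping: [1/x^2 <= 2/x - 2/(x+1)] since [x >= 1]. *)
have -> : - (2 / x) + 1 / x ^+ 2 - - (2 / (x + 1)) = - (x - 1) / (x ^+ 2 * (x + 1)).
  by field; apply/andP; split; apply/eqP => x0; lra.
rewrite mulNr oppr_le0 divr_ge0 ?subr_ge0 // mulr_ge0 ?exprn_ge0 //; lra.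
Qed.

Lemma cvg_ratio_of_small_dev (R : realType) (a u : nat -> R) (c K : R) :
  (forall n, `|a n - n%:R * c - u n| <= K) ->
  (forall j, \forall n \near \oo, `|u n| <= n%:R / j.+1%:R) ->
  (fun n => a n / n%:R) @ \oo --> c.
Proof.
move=> aK u_small; apply/cvgrPdist_le => eps eps0.
set j := Num.truncn (2 / eps).
have j_eps : j.+1%:R^-1 < eps / 2.
  rewrite -[eps / 2]invf_div ltf_pV2 ?posrE ?ltr0n ?divr_gt0 //.
  exact: truncnS_gt.
near=> n.
have n_gt0 : 0 < n%:R :> R.
  by rewrite ltr0n; near: n; exact: nbhs_infty_gt.
have nK : 2 * K < n%:R * eps.
  rewrite -ltr_pdivrMr //; apply: lt_le_trans (truncnS_gt _) _; rewrite ler_nat.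
  by near: n; exact: nbhs_infty_gt.
have un : `|u n| <= n%:R / j.+1%:R by near: n; exact: u_small.
have dev : c - a n / n%:R = - (a n - n%:R * c - u n + u n) / n%:R.
  by field; rewrite gt_eqF.
rewrite dev mulNr normrN normf_div (gtr0_norm n_gt0) ler_pdivrMr //.
apply: le_trans (ler_normD _ _) _.
have uE : n%:R / j.+1%:R <= n%:R * eps / 2 by rewrite -mulrA ler_wpM2l ?ltW.
apply: le_trans (lerD (aK n) (le_trans un uE)) _.
rewrite [eps * _]mulrC; lra.
Unshelve. all: by end_near.
Qed.

Lemma measure_bigsetU_seq d (T : measurableType d) (R : realType)
    (mu : {measure set T -> \bar R}) (I : choiceType) (F : I -> set T)
    (l : seq I) (Q : pred I) :
  uniq l -> (forall s, measurable (F s)) ->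
  {in l &, forall s s', s != s' -> F s `&` F s' = set0} ->
  mu (\big[setU/set0]_(s <- l | Q s) F s) = (\sum_(s <- l | Q s) mu (F s))%E.
Proof.
elim: l => [|x l IHl] /= ul mF dF; first by rewrite !big_nil measure0.
move: ul => /andP[xl ul].
have dF' : {in l &, forall s s', s != s' -> F s `&` F s' = set0}.
  by move=> s s' sl s'l; apply: dF; rewrite in_cons ?sl ?s'l orbT.
rewrite !big_cons; case: ifP => Qx; last exact: IHl.
have mB : measurable (\big[setU/set0]_(s <- l | Q s) F s).
  by apply: bigsetU_measurable => s _.
rewrite measureU //; first by congr (_ + _)%E; exact: IHl.
rewrite -bigcup_seq_cond; apply/seteqP; split => // t [Fxt [s /andP[sl _] Fst]].
have xs : x != s by apply: contraNneq xl => ->.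
have sxl : s \in x :: l by rewrite in_cons sl orbT.
have := dF x s (mem_head _ _) sxl xs.
by move/seteqP => [+ _]; apply.
Qed.

Section WalkFromState.
Variables (R : realType) (d : measure_display) (T : measurableType d)
  (P : probability T R) (p : int -> R) (S : nat -> T -> int).
Hypothesis walkS : is_modm_walk P p S.
Variable z0 : int.

Definition path_pos (s : seq bool) (k : nat) : int := path_end z0 (take k s).

Definition cylinder (n : nat) (s : seq bool) :=
  [set t | forall k, (k <= n)%N -> S k t = path_pos s k].

Lemma cylinder_measurable n s : measurable (cylinder n s).
Proof.
rewrite (_ : cylinder n s =
    \bigcap_(k in [set k | (k <= n)%N]) [set t | S k t = path_pos s k]).
  by apply: bigcap_measurableType => k _; exact: walkS.1.
by apply/seteqP; split => t /= h k; apply: h.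
Qed.

Lemma path_pos0 s : path_pos s 0 = z0.
Proof. by rewrite /path_pos take0. Qed.

Lemma path_pos_rcons s b k : (k <= size s)%N -> path_pos (rcons s b) k = path_pos s k.
Proof. by move=> ks; rewrite /path_pos -cats1 takel_cat. Qed.

Lemma path_pos_step s i :
  (i < size s)%N -> path_pos s i.+1 = path_pos s i + step (nth false s i).
Proof. by move=> i_lt; rewrite /path_pos (take_nth false i_lt) path_end_rcons. Qed.

Lemma path_pos_inj s s' : size s = size s' ->
  (forall k, (k <= size s)%N -> path_pos s k = path_pos s' k) -> s = s'.
Proof.
move=> ss' pos_eq; apply: (@eq_from_nth _ false) => // i i_lt.
have i_lt' : (i < size s')%N by rewrite -ss'.
have := pos_eq i.+1 i_lt; rewrite !path_pos_step // (pos_eq i (ltnW i_lt)) => /addrI.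
by case: (nth false s i); case: (nth false s' i).
Qed.

Lemma cylinder_disj s s' : size s = size s' -> s != s' ->
  cylinder (size s) s `&` cylinder (size s) s' = set0.
Proof.
move=> ss' /eqP neq; apply/seteqP; split => // t [ts ts'].
by apply: neq; apply: path_pos_inj => // k ks; rewrite -ts // ts'.
Qed.

Lemma modm_trans_step x b : modm_trans p x (x + step b) = if b then p x else 1 - p x.
Proof.
rewrite /modm_trans; case: b => /=; first by rewrite eqxx.
by rewrite (inj_eq (addrI x)) eqxx.
Qed.

Lemma P_cylinder s :
  P (cylinder (size s) s) = (P [set t | S 0 t = z0] * (path_weight p z0 s)%:E)%E.
Proof.
elim/last_ind: s => [|s b IHs].
  rewrite mule1; congr (P _); apply/seteqP; split => t /=.
    by move/(_ 0%N isT); rewrite path_pos0.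
  by move=> S0 k; rewrite leqn0 => /eqP ->; rewrite path_pos0.
rewrite size_rcons (walkS.2 (size s) (path_pos (rcons s b))).
rewrite (_ : [set t | _] = cylinder (size s) s); last first.
  by apply/seteqP; split => t /= h k ks; rewrite ?path_pos_rcons ?h // path_pos_rcons.
have last_pos : path_pos (rcons s b) (size s).+1 = path_end z0 s + step b.
  by rewrite /path_pos take_oversize ?size_rcons // path_end_rcons.
rewrite IHs path_pos_rcons // last_pos /path_pos take_size modm_trans_step.
by rewrite path_weight_rcons -muleA -EFinM.
Qed.

Definition start_prob := fine (P [set t | S 0 t = z0]).

Lemma start_probE : P [set t | S 0 t = z0] = start_prob%:E.
Proof. by rewrite /start_prob fineK // fin_num_measure //; exact: walkS.1. Qed.

Lemma start_prob_le1 : start_prob <= 1.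
Proof. by rewrite -lee_fin -start_probE probability_le1 //; exact: walkS.1. Qed.

Lemma P_cylinders (Q : pred (seq bool)) n :
  P (\big[setU/set0]_(s <- bool_paths n | Q s) cylinder n s) =
  (start_prob * \sum_(s <- bool_paths n | Q s) path_weight p z0 s)%:E.
Proof.
rewrite measure_bigsetU_seq; last 3 first.
- exact: uniq_bool_paths.
- exact: cylinder_measurable.
- move=> s s' /size_bool_paths sn /size_bool_paths s'n.
  by rewrite -{1 2}sn; apply: cylinder_disj; rewrite sn s'n.
rewrite big_seq_cond (eq_bigr (fun s => (start_prob * path_weight p z0 s)%:E)).
  by rewrite sumEFin -big_seq_cond big_distrr.
move=> s /andP[/size_bool_paths <- _].
by rewrite EFinM -start_probE; exact: P_cylinder.
Qed.

Hypothesis p01 : forall z, 0 <= p z <= 1.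

Definition all_cylinders n := \big[setU/set0]_(s <- bool_paths n) cylinder n s.

Lemma start_off_cylinders_null n :
  P ([set t | S 0 t = z0] `\` all_cylinders n) = 0%E.
Proof.
have mS0 : measurable [set t | S 0 t = z0] by exact: walkS.1.
have mC : measurable (all_cylinders n).
  by apply: bigsetU_measurable => s _; exact: cylinder_measurable.
have C_sub : all_cylinders n `<=` [set t | S 0 t = z0].
  move=> t; rewrite /all_cylinders -bigcup_seq => -[s _ ts].
  by rewrite /= (ts 0%N isT) path_pos0.
have total : \sum_(s <- bool_paths n) path_weight p z0 s = 1.
  rewrite -(expect_path_cst p n z0 1) expect_pathE.
  by apply: eq_bigr => s _; rewrite mulr1.
have finS0 : (P [set t | S 0 t = z0] < +oo)%E by rewrite start_probE ltry.
rewrite (measureD mS0 mC finS0) (setIidr C_sub).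
change (P [set t | S 0 t = z0] - P (all_cylinders n) = 0)%E.
by rewrite (P_cylinders xpredT n) total mulr1 start_probE subee.
Qed.

Lemma off_cylinders_negligible :
  P.-negligible (\bigcup_n ([set t | S 0 t = z0] `\` all_cylinders n)).
Proof.
apply: negligible_bigcup => n; apply/negligibleP; last exact: start_off_cylinders_null.
apply: measurableD; first exact: walkS.1.
by apply: bigsetU_measurable => s _; exact: cylinder_measurable.
Qed.

Section Deviations.
Variables (phi : int -> R) (c B : R).
Hypothesis phi_drift : forall z,
  p z * phi (z + step true) + (1 - p z) * phi (z + step false) = phi z + c.
Hypothesis phi_step_bound : forall z b, `|phi (z + step b) - phi z - c| <= B.

Definition dev_event n e :=
  \big[setU/set0]_(s <- bool_paths n | n%:R * e < `|centred phi c z0 s|) cylinder n s.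

Lemma dev_event_measurable n e : measurable (dev_event n e).
Proof. by apply: bigsetU_measurable => s _; exact: cylinder_measurable. Qed.

(* Markov's inequality for the fourth moment. *)
Lemma P_dev_event_le n e : 0 < e -> (0 < n)%N ->
  (P (dev_event n e) <= ((4 * B ^+ 4 / e ^+ 4) / n%:R ^+ 2)%:E)%E.
Proof.
move=> e0 n0; rewrite /dev_event P_cylinders lee_fin.
have ne0 : 0 < n%:R * e by rewrite mulr_gt0 // ltr0n.
set W := \sum_(s <- _ | _) _.
have W0 : 0 <= W by apply: sumr_ge0 => s _; exact: path_weight_ge0.
have W_le : W <= expect_path p n z0 (fun s => centred phi c z0 s ^+ 4) / (n%:R * e) ^+ 4.
  rewrite expect_pathE big_distrl /= /W big_mkcond /=; apply: ler_sum => s _.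
  rewrite -mulrA; have w0 := path_weight_ge0 _ p01 z0 s.
  case: ifP => [dev_s|_]; last first.
    by apply: mulr_ge0 => //; rewrite divr_ge0 ?exprn_even_ge0.
  apply: ler_peMr => //; rewrite ler_pdivlMr ?exprn_gt0 // mul1r.
  have dev2 : (n%:R * e) ^+ 2 <= centred phi c z0 s ^+ 2.
    rewrite -[X in _ <= X]real_normK ?num_real //.
    by rewrite lerXn2r ?nnegrE ?(ltW ne0) ?normr_ge0 // ltW.
  by rewrite -[4%N]/(2 * 2)%N !exprM lerXn2r ?nnegrE ?sqr_ge0.
apply: le_trans (_ : W <= _); first exact: ler_piMl W0 start_prob_le1.
apply: le_trans W_le _.
have -> : (4 * B ^+ 4 / e ^+ 4) / n%:R ^+ 2 = (4 * n%:R ^+ 2 * B ^+ 4) / (n%:R * e) ^+ 4.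
  by field; rewrite pnatr_eq0 -lt0n n0 gt_eqF.
apply: ler_wpM2r; first by rewrite invr_ge0 exprn_ge0 // ltW.
exact: expect_centred_pow4_le.
Qed.

Lemma dev_event_summable e : 0 < e -> (\sum_(k <oo) P (dev_event k.+1 e) < +oo)%E.
Proof.
move=> e0; set K := 4 * B ^+ 4 / e ^+ 4.
have K0 : 0 <= K.
  by apply: divr_ge0; [apply: mulr_ge0 => //|]; exact: exprn_even_ge0.
apply: (le_lt_trans _ (ltry (2 * K))).
apply: (@le_trans _ _ (\sum_(k <oo) (K / (k.+1%:R ^+ 2))%:E)%E).
  apply: lee_nneseries => [k _ _|k _]; first exact: measure_ge0.
  exact: P_dev_event_le.
apply: lime_le.
  by apply: is_cvg_nneseries => k _; rewrite lee_fin divr_ge0 // exprn_ge0.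
apply: nearW => N; rewrite sumEFin lee_fin.
rewrite (eq_bigr (fun k => K * (1 / k.+1%:R ^+ 2))); last by move=> k _; rewrite mul1r.
rewrite -big_distrr /= mulrC ler_wpM2r //.
by apply: le_trans (sum_inv_sqr_le _ N) _; rewrite gerBl.
Qed.

Lemma centred_le_of_not_dev n e t : all_cylinders n t -> ~ dev_event n e t ->
  `|phi (S n t) - phi z0 - n%:R * c| <= n%:R * e.
Proof.
rewrite /all_cylinders /dev_event -!bigcup_seq_cond => -[s /andP[sn _] ts] nodev.
have size_s := size_bool_paths _ _ sn.
have -> : phi (S n t) - phi z0 - n%:R * c = centred phi c z0 s.
  by rewrite /centred (ts n (leqnn n)) /path_pos -size_s take_size.
by rewrite leNgt; apply/negP => dev; apply: nodev; exists s => //; rewrite /= sn.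
Qed.

Lemma dev_limsup_negligible :
  P.-negligible (\bigcup_j lim_sup_set (fun k => dev_event k.+1 j.+1%:R^-1)).
Proof.
apply: negligible_bigcup => j; apply/negligibleP.
  apply: bigcap_measurable => // k _; apply: bigcup_measurable => i _.
  exact: dev_event_measurable.
apply: lim_sup_set_cvg0 => [k|]; first exact: dev_event_measurable.
by apply: dev_event_summable; rewrite invr_gt0 ltr0n.
Qed.

Lemma centred_small_ae : P.-negligible [set t | S 0 t = z0 /\
  ~ (forall j, \forall n \near \oo, `|phi (S n t) - phi z0 - n%:R * c| <= n%:R / j.+1%:R)].
Proof.
apply: (negligibleS _ (negligibleU off_cylinders_negligible dev_limsup_negligible)).
move=> t [S0t not_small]; apply: contrapT => good; apply: not_small => j.
have [n0 no_dev] : exists n0, forall k, (n0 <= k)%N -> ~ dev_event k.+1 j.+1%:R^-1 t.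
  apply: contrapT => devs; apply: good; right; exists j => // n _.
  by apply: contrapT => nodev; apply: devs; exists n => k nk devk; apply: nodev; exists k.
near=> n; apply: centred_le_of_not_dev.
  by apply: contrapT => off; apply: good; left; exists n.
have n_gt : (n0 < n)%N by near: n; exact: nbhs_infty_gt.
have n_pos := leq_ltn_trans (leq0n n0) n_gt.
by rewrite -(prednK n_pos); apply: no_dev; rewrite -ltnS prednK.
Unshelve. all: by end_near.
Qed.

Variable Hb : R.
Hypothesis phi_near_id : forall z, `|phi z - z%:~R| <= Hb.

Lemma walk_cvg_from : P.-negligible [set t | S 0 t = z0 /\
  ~ ((fun n : nat => (S n t)%:~R / n%:R : R) @ \oo --> c)].
Proof.
apply: negligibleS centred_small_ae => t [S0t not_cvg]; split => // small.
apply: not_cvg; apply: (@cvg_ratio_of_small_dev _ _ _ _ (Hb + `|phi z0|) _ small) => n.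
rewrite (_ : _ - _ - _ = (S n t)%:~R - phi (S n t) + phi z0); last by ring.
by apply: le_trans (ler_normD _ _) _; rewrite lerD2r distrC.
Qed.

End Deviations.
End WalkFromState.

Arguments walk_cvg_from {R d T P p S} walkS z0 p01 {phi c B} phi_drift phi_step_bound {Hb}.

Section Corrector.
Variables (R : realType) (m : nat) (p : int -> R).
Hypothesis m_gt0 : (0 < m)%N.
Hypothesis p_periodic : forall j : int, p (j + Posz m) = p j.
Local Notation N := m.-1.+1.

Lemma p_modz z : p z = p (z %% m)%Z.
Proof.
have p_addk (k : nat) j : p (j + k%:Z * m%:Z) = p j.
  elim: k j => [|k IHk] j; first by rewrite mul0r addr0.
  by rewrite -addn1 PoszD mulrDl mul1r addrA p_periodic IHk.
have zE := divz_eq z m%:Z.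
case: (z %/ m)%Z zE => k zE; first by rewrite {1}zE addrC p_addk.
have -> : (z %% m)%Z = z + (k.+1)%:Z * m%:Z by rewrite {2}zE NegzE mulNr; ring.
by rewrite p_addk.
Qed.

Definition resn (z : int) : nat := absz (z %% m)%Z.

Lemma resnE z : (z %% m)%Z = resn z.
Proof. by rewrite /resn gez0_abs // modz_ge0 // eqz_nat -lt0n. Qed.

Lemma resn_ltN z : (resn z < N)%N.
Proof. by rewrite prednK // -ltz_nat -resnE ltz_pmod. Qed.

Lemma resn_step z b :
  resn (z + step b) = if b then ((resn z).+1 %% m)%N else ((resn z + m).-1 %% m)%N.
Proof.
apply/eqP; rewrite -eqz_nat; apply/eqP; rewrite -resnE -modzDml (resnE z).
case: b => /=; rewrite -modz_nat; first by rewrite -addn1 PoszD.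
have -> : Posz (resn z + m).-1 = Posz (resn z) - 1 + Posz m.
  have : (0 < resn z + m)%N by rewrite addn_gt0 m_gt0 orbT.
  rewrite addrAC -PoszD; case: (resn z + m)%N => //= k _.
  by rewrite -addn1 PoszD addrK.
by rewrite modzDr.
Qed.

Definition res (z : int) : 'I_N := inord (resn z).

Lemma p_res z : p z = p (res z).
Proof. by rewrite p_modz resnE /res inordK // resn_ltN. Qed.

Lemma res_step z b :
  res (z + step b) = if b then res_succ m (res z) else res_pred m (res z).
Proof. by rewrite /res /res_succ /res_pred inordK ?resn_ltN // resn_step; case: b. Qed.

Variable h : 'I_N -> R.
Hypothesis h_poisson : forall i,
  h i - (p i * h (res_succ m i) + (1 - p i) * h (res_pred m i)) =
  (p i - (1 - p i)) - modm_drift m p.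

Definition corrector (z : int) : R := z%:~R + h (res z).

Lemma corrector_drift z :
  p z * corrector (z + step true) + (1 - p z) * corrector (z + step false) =
  corrector z + modm_drift m p.
Proof.
have := h_poisson (res z); rewrite -p_res /corrector !res_step.
have -> : ((z + step true)%:~R : R) = z%:~R + 1 by rewrite intrD.
have -> : ((z + step false)%:~R : R) = z%:~R - 1 by rewrite intrD.
lra.
Qed.

Lemma normr_le_sum i : `|h i| <= \sum_j `|h j|.
Proof. by rewrite (bigD1 i) //= lerDl sumr_ge0. Qed.

Lemma corrector_near_id z : `|corrector z - z%:~R| <= \sum_i `|h i|.
Proof. by rewrite /corrector addrC addKr normr_le_sum. Qed.

Lemma corrector_step_bound z b :
  `|corrector (z + step b) - corrector z - modm_drift m p| <=
  1 + 2 * \sum_i `|h i| + `|modm_drift m p|.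
Proof.
rewrite /corrector intrD.
have s1 : `|(step b)%:~R : R| <= 1 by rewrite -intr_norm; case: b => /=; rewrite lexx.
set s : R := (step b)%:~R in s1 *; set c := modm_drift m p.
have := normr_le_sum (res (z + step b)); have := normr_le_sum (res z).
rewrite (_ : _ - _ - _ = s + h (res (z + step b)) - h (res z) - c); last by ring.
have := ler_normB (s + h (res (z + step b)) - h (res z)) c.
have := ler_normB (s + h (res (z + step b))) (h (res z)).
have := ler_normD s (h (res (z + step b))).
lra.
Qed.

End Corrector.

Arguments corrector_drift {R m p}.
Arguments corrector_step_bound {R m}.
Arguments corrector_near_id {R m}.

Theorem theorem5p1 (R : realType) (d : measure_display) (T : measurableType d)
  (P : probability T R) (m : nat) (p : int -> R) (S : nat -> T -> int) :
  (0 < m)%N ->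
  (forall j : int, p (j + (Posz m)) = p j) ->
  (forall j : int, 0 < p j < 1) ->
  is_modm_walk P p S ->
  {ae P, forall t,
     (fun n : nat => (S n t)%:~R / n%:R : R) @ \oo --> modm_drift m p}.
Proof.
move=> m_gt0 p_periodic p01 walkS.
have p01' z : 0 <= p z <= 1 by have /andP[p0 p1] := p01 z; rewrite !ltW.
have [h h_poisson] := poisson_solution m_gt0 p01.
have cvg_from z0 := walk_cvg_from walkS z0 p01'
  (corrector_drift m_gt0 p_periodic _ h_poisson)
  (corrector_step_bound p h) (corrector_near_id h).
have := negligibleU (negligible_bigcup (fun k : nat => cvg_from (Posz k)))
  (negligible_bigcup (fun k : nat => cvg_from (Negz k))).
apply: negligibleS => t /= not_cvg.
by case S0t : (S 0 t) => [k|k]; [left|right]; exists k.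
Qed.
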